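(* Let $(\mathcal B^0,\|\cdot\|_0)$ and $(\mathcal B^1,\|\cdot\|_1)$ be Banach spaces over $\mathbb K\in\{\mathbb R,\mathbb C\}$ with $\mathcal B^1\subset\mathcal B^0$ as a linear subspace, and let $\mathcal L:\mathcal B^1\to\mathcal B^0$ be a linear operator. The following are equivalent: (a) $\mathcal L$ is weak bounded; (b) whenever $f_\epsilon,f\in\mathcal B^1$ satisfy $\|f_\epsilon-f\|_0\to0$ as $\epsilon\to0$ and $\sup_{\epsilon>0}\|f_\epsilon\|_1<+\infty$, then $\|\mathcal Lf_\epsilon-\mathcal Lf\|_0\to0$ as $\epsilon\to0$; (c) $\sup\{\|\mathcal Lf\|_0:\ f\in\mathcal B^1,\ \|f\|_1\le1,\ \|f\|_0\le\delta\}\to0$ as $\delta\to0$.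
   Context: A linear operator $\mathcal L:\mathcal B^1\to\mathcal B^0$ is called weak bounded if for every $\epsilon>0$ there is a constant $c(\epsilon)>0$ such that $\|\mathcal Lf\|_0\le c(\epsilon)\|f\|_0+\epsilon\|f\|_1$ for all $f\in\mathcal B^1$. *)

From HB Require Import structures.
From mathcomp Require Import all_boot all_order all_algebra.
From mathcomp Require Import all_classical all_reals all_analysis.
From mathcomp Require Import complex.
Set Implicit Arguments. Unset Strict Implicit. Unset Printing Implicit Defensive.
Import Order.TTheory GRing.Theory Num.Theory.
Import numFieldNormedType.Exports.
Local Open Scope classical_set_scope.
Local Open Scope ring_scope.

(* B^1 is modelled as a normed space V1 together with an injective linear
   map i : V1 -> V0 realising the inclusion B^1 ⊂ B^0; for f in B^1,
   ||f||_1 = `|f| (norm of V1) and ||f||_0 = `|i f| (norm of V0). *)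

Definition weak_bounded (K : numFieldType) (V0 V1 : normedModType K)
    (i L : V1 -> V0) : Prop :=
  forall eps : K, 0 < eps ->
    exists c : K, 0 < c /\ forall f : V1, `|L f| <= c * `|i f| + eps * `|f|.

(* condition (b); the family (f_eps)_{eps>0} is a function K -> V1, of which
   only the values at eps > 0 matter ("eps -> 0" means eps -> 0^+). *)
Definition cond_b (K : numFieldType) (V0 V1 : normedModType K)
    (i L : V1 -> V0) : Prop :=
  forall (fe : K -> V1) (f : V1),
    (fun eps => `|i (fe eps) - i f|) @ 0^'+ --> (0 : K) ->
    (exists M : K, forall eps : K, 0 < eps -> `|fe eps| <= M) ->
    (fun eps => `|L (fe eps) - L f|) @ 0^'+ --> (0 : K).

(* condition (c): sup{ ||L f||_0 : ||f||_1 <= 1, ||f||_0 <= delta } -> 0 as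
   delta -> 0^+, written out: for every eta > 0 there is d > 0 such that for
   every 0 < delta < d the supremum is <= eta. *)
Definition cond_c (K : numFieldType) (V0 V1 : normedModType K)
    (i L : V1 -> V0) : Prop :=
  forall eta : K, 0 < eta -> exists d : K, 0 < d /\
    forall delta : K, 0 < delta -> delta < d ->
      forall f : V1, `|f| <= 1 -> `|i f| <= delta -> `|L f| <= eta.

Definition weak_bounded_TFAE (K : numFieldType) : Prop :=
  forall (V0 V1 : completeNormedModType K)
         (i : {linear V1 -> V0}) (L : {linear V1 -> V0}),
    injective i ->
    [<-> weak_bounded i L; cond_b i L; cond_c i L].

From HB Require Import structures.
From mathcomp Require Import all_boot all_order all_algebra.
From mathcomp Require Import all_classical all_reals all_analysis.
From mathcomp Require Import complex.
Local Open Scope ring_scope.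

(* (a) -> (b): apply the weak bound to f_eps - f, whose 1-norm is bounded by
   M + ||f||_1, so the 1-norm term is made small by the choice of eps.
   (c) -> (a): a bound on L over {||g||_1 <= 1, ||g||_0 <= delta} extends by
   homogeneity to ||Lf||_0 <= (eta/delta) ||f||_0 + eta ||f||_1.
   (b) -> (c): if (c) fails, choosing for each eps a bad f_eps with
   ||f_eps||_1 <= 1 and ||f_eps||_0 <= eps gives a family violating (b)
   at f = 0. *)

Section WeakBoundedness.
Import Order.TTheory GRing.Theory Num.Theory.
Import numFieldNormedType.Exports.
Local Open Scope classical_set_scope.

Variables (K : numFieldType) (V0 V1 : normedModType K).
Variables (i L : {linear V1 -> V0}).

Lemma weak_bounded_cond_b : weak_bounded i L -> cond_b i L.
Proof.
move=> wbL fe f fe_cvg [M feM].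
set B := M + `|f| + 1.
have B_gt0 : 0 < B.
  by rewrite ltr_wpDl // addr_ge0 // (le_trans _ (feM 1 ltr01)).
have feB eps : 0 < eps -> `|fe eps - f| <= B.
  move=> eps_gt0; apply: le_trans (ler_normB _ _) _.
  by rewrite ler_wpDr // lerD2r feM.
apply/cvgr0Pnorm_le => e e_gt0.
have e2_gt0 : 0 < e / 2 by rewrite divr_gt0.
have [c [c_gt0 Lc]] := wbL (e / 2 / B) (divr_gt0 e2_gt0 B_gt0).
move/cvgr0Pnorm_le: fe_cvg => /(_ (e / 2 / c) (divr_gt0 e2_gt0 c_gt0)).
apply: filterS2 (nbhs_right_gt 0) => eps eps_gt0.
rewrite !normr_id -!linearB => ife_near.
apply: le_trans (Lc (fe eps - f)) _.
rewrite [leRHS](splitr e); apply: lerD.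
  by rewrite mulrC -ler_pdivlMr.
rewrite (le_trans (ler_wpM2l _ (feB _ eps_gt0))) ?divfK ?gt_eqF //.
by rewrite ltW ?divr_gt0.
Qed.

Lemma homogeneous_bound_of_thin_ball (delta eta : K) : 0 < delta ->
  (forall g : V1, `|g| <= 1 -> `|i g| <= delta -> `|L g| <= eta) ->
  forall f : V1, `|L f| <= eta / delta * `|i f| + eta * `|f|.
Proof.
move=> delta_gt0 Lball f.
have [->|f_neq0] := eqVneq f 0; first by rewrite !linear0 !normr0 !mulr0 addr0.
set s := `|i f| / delta + `|f|.
have s_gt0 : 0 < s by rewrite ltr_wpDl ?normr_gt0 // divr_ge0 // ltW.
have normZs (V : normedModType K) (v : V) : `|s^-1 *: v| = `|v| / s.
  by rewrite normrZ gtr0_norm ?invr_gt0 // mulrC.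
have := Lball (s^-1 *: f); rewrite !linearZ /= !normZs !ler_pdivrMr //.
have deltas : delta * s = `|i f| + delta * `|f|.
  by rewrite mulrDr mulrC divfK ?gt_eqF.
have ifd_ge0 : 0 <= `|i f| / delta by rewrite divr_ge0 // ltW.
have df_ge0 : 0 <= delta * `|f| by rewrite mulr_ge0 // ltW.
rewrite mul1r deltas /s lerDl lerDr ifd_ge0 df_ge0 => /(_ isT isT).
by rewrite mulrDr [_ / delta]mulrC mulrA.
Qed.

Lemma cond_c_weak_bounded : cond_c i L -> weak_bounded i L.
Proof.
move=> cL eps eps_gt0; have [d [d_gt0 Ld]] := cL eps eps_gt0.
have d2_gt0 : 0 < d / 2 by rewrite divr_gt0.
have d2_lt_d : d / 2 < d by rewrite ltr_pdivrMr // ltr_pMr // ltr1n.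
exists (eps / (d / 2)); split; first by rewrite divr_gt0.
by apply: homogeneous_bound_of_thin_ball => // g g_le1; apply: Ld.
Qed.

Lemma cond_b_cond_c : cond_b i L -> cond_c i L.
Proof.
move=> bL eta eta_gt0; apply: contrapT => no_d.
have bad d : exists f : V1,
    0 < d -> [/\ `|f| <= 1, `|i f| <= d & ~ `|L f| <= eta].
  have [d_gt0|] := pselect (0 < d); last by exists 0.
  apply: contrapT => no_f; apply: no_d; exists d; split => //.
  move=> delta _ lt_delta_d f f_le1 if_le.
  apply: contrapT => Lf_gt; apply: no_f; exists f => _.
  by split => //; apply: le_trans if_le (ltW lt_delta_d).
have [fe feP] := choice bad.
have Lfe_cvg : (fun e => `|L (fe e)|) @ 0^'+ --> (0 : K).
  have -> : (fun e => `|L (fe e)|) = (fun e => `|L (fe e) - L 0|).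
    by apply/funext => e; rewrite linear0 subr0.
  apply: bL; last by exists 1 => e /feP[].
  apply/cvgr0Pnorm_le => r r_gt0.
  apply: filterS2 (nbhs_right_le r_gt0) (nbhs_right_gt 0) => e e_le e_gt0.
  have [_ ife_le _] := feP e e_gt0.
  by rewrite normr_id linear0 subr0 (le_trans ife_le).
move/cvgr0Pnorm_le: Lfe_cvg => /(_ eta eta_gt0) Lfe_near.
have [e [Lfe_le e_gt0]] := filter_ex (filterI Lfe_near (nbhs_right_gt 0)).
by have [_ _] := feP e e_gt0; apply; rewrite normr_id in Lfe_le.
Qed.

Lemma weak_bounded_tfae : [<-> weak_bounded i L; cond_b i L; cond_c i L].
Proof.
tfae.
- exact: weak_bounded_cond_b.
- exact: cond_b_cond_c.
- exact: cond_c_weak_bounded.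
Qed.

End WeakBoundedness.

Theorem mainTheorem5 (R : realType) :
  weak_bounded_TFAE R /\ weak_bounded_TFAE R[i].
Proof. by split => V0 V1 i L _; exact: weak_bounded_tfae. Qed.
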